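(* Assume $\tau_1\tau_2\|K\|^2\le1/2$ and $\tau_1\le1/(2L)$, and that $x_0\in[0,1]^n$ and $y_0\in\mathbb R_+^{m_1}\times\mathbb R^{m_2}$. Then for every $N\ge1$, \[\frac1{\tau_1}\sum_{k=1}^N\|x_k-x_{k-1}\|^2+\frac1{\tau_2}\sum_{k=1}^N\|y_k-y_{k-1}\|^2\le4\Delta\Phi_N+\frac8{\tau_1}\sum_{k=1}^N\|x_{k-1}\|^2+16\tau_2\|r\|^2N,\] where $\Delta\Phi_N:=\Phi(x_0,y_0)-\Phi(x_N,y_N)$.
   Context: Let $n,m_1,m_2$ be positive integers, $Q\in\mathbb R^{n\times n}$ symmetric, $c\in\mathbb R^n$, $A\in\mathbb R^{m_1\times n}$, $b\in\mathbb R^{m_1}$, $B\in\mathbb R^{m_2\times n}$, $d\in\mathbb R^{m_2}$. Let $K:=-\begin{pmatrix}A\\ B\end{pmatrix}$ and $r:=(b;d)$. Fix $\rho\ge0$ and let $\mathbf 1$ be the all-ones vector. Define $\hat{\mathcal L}(x,y):=\langle x,Qx\rangle+\langle c,x\rangle+\langle y,Kx+r\rangle+\rho\langle x,\mathbf 1-x\rangle$ (no convexity is assumed), with $\nabla_x\hat{\mathcal L}(x,y)=c+\rho\mathbf 1+K^\top y+2Qx-2\rho x$. Let $Y:=\mathbb R_+^{m_1}\times\mathbb R^{m_2}$, $h_1$ the indicator of $[0,1]^n$, $h_2$ the indicator of $Y$ ($0$ on the set, $+\infty$ outside), $\Phi(x,y):=\hat{\mathcal L}(x,y)+h_1(x)-h_2(y)$.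 $L:=2(\|Q\|+\rho)$, $\|\cdot\|$ the spectral norm on matrices and Euclidean norm on vectors. PDHG iterates with step sizes $\tau_1,\tau_2>0$: $x_{-1}:=x_0$, $\bar x_0:=x_0$, and for $k\ge1$: $y_k=\Pi_Y(y_{k-1}+\tau_2(K\bar x_{k-1}+r))$, $x_k=\Pi_{[0,1]^n}(x_{k-1}-\tau_1\nabla_x\hat{\mathcal L}(x_{k-1},y_k))$, $\bar x_k=2x_k-x_{k-1}$, with $\Pi$ the Euclidean projection. *)

From HB Require Import structures.
From mathcomp Require Import all_boot all_order all_algebra.
From mathcomp Require Import all_classical all_reals.
From mathcomp Require Import ereal.
Set Implicit Arguments. Unset Strict Implicit. Unset Printing Implicit Defensive.
Import Order.TTheory GRing.Theory Num.Theory.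
Local Open Scope ring_scope.

Section PDHG.
Variable R : realType.

Definition vdot {n} (u v : 'cV[R]_n) : R := \sum_i u i 0 * v i 0.
Definition vnorm {n} (u : 'cV[R]_n) : R := Num.sqrt (vdot u u).

Definition specnorm {m n} (M : 'M[R]_(m, n)) : R :=
  sup [set vnorm (M *m x) | x in [set x : 'cV[R]_n | vnorm x <= 1]]%classic.

Definition ones n : 'cV[R]_n := const_mx 1.

Definition Kmat {n m1 m2} (A : 'M[R]_(m1, n)) (B : 'M[R]_(m2, n))
  : 'M[R]_(m1 + m2, n) := - col_mx A B.
Definition rvec {m1 m2} (b : 'cV[R]_m1) (d : 'cV[R]_m2) : 'cV[R]_(m1 + m2) :=
  col_mx b d.

Definition in_box {n} (x : 'cV[R]_n) : Prop := forall i, 0 <= x i 0 <= 1.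
Definition in_Y {m1 m2} (y : 'cV[R]_(m1 + m2)) : Prop :=
  forall i : 'I_m1, 0 <= y (lshift m2 i) 0.

Definition proj_box {n} (x : 'cV[R]_n) : 'cV[R]_n :=
  \col_i Num.min 1 (Num.max 0 (x i 0)).
Definition proj_Y {m1 m2} (y : 'cV[R]_(m1 + m2)) : 'cV[R]_(m1 + m2) :=
  col_mx (\col_i Num.max 0 (usubmx y i 0)) (dsubmx y).

Variables (n m1 m2 : nat) (Q : 'M[R]_n) (c : 'cV[R]_n)
  (A : 'M[R]_(m1, n)) (b : 'cV[R]_m1) (B : 'M[R]_(m2, n)) (d : 'cV[R]_m2)
  (rho : R).

Let K := Kmat A B.
Let r := rvec b d.

Definition Lhat (x : 'cV[R]_n) (y : 'cV[R]_(m1 + m2)) : R :=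
  vdot x (Q *m x) + vdot c x + vdot y (K *m x + r) + rho * vdot x (ones n - x).

Definition gradx_Lhat (x : 'cV[R]_n) (y : 'cV[R]_(m1 + m2)) : 'cV[R]_n :=
  c + rho *: ones n + K^T *m y + 2%:R *: (Q *m x) - (2%:R * rho) *: x.

Definition h1 (x : 'cV[R]_n) : \bar R := if `[< in_box x >] then 0%E else +oo%E.
Definition h2 (y : 'cV[R]_(m1 + m2)) : \bar R :=
  if `[< in_Y y >] then 0%E else +oo%E.

Definition Phi (x : 'cV[R]_n) (y : 'cV[R]_(m1 + m2)) : \bar R :=
  ((Lhat x y)%:E + h1 x - h2 y)%E.

(* PDHG: state after step k is (x_k, y_k, x_{k-1}); xbar_k = 2 x_k - x_{k-1} *)
Fixpoint pdhg (tau1 tau2 : R) (x0 : 'cV[R]_n) (y0 : 'cV[R]_(m1 + m2)) (k : nat)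
  : 'cV[R]_n * 'cV[R]_(m1 + m2) * 'cV[R]_n :=
  match k with
  | 0 => (x0, y0, x0)
  | k'.+1 =>
      let: (xp, yp, xpp) := pdhg tau1 tau2 x0 y0 k' in
      let xbar := 2%:R *: xp - xpp in
      let yk := proj_Y (yp + tau2 *: (K *m xbar + r)) in
      let xk := proj_box (xp - tau1 *: gradx_Lhat xp yk) in
      (xk, yk, xp)
  end.

Definition xit tau1 tau2 x0 y0 k := (pdhg tau1 tau2 x0 y0 k).1.1.
Definition yit tau1 tau2 x0 y0 k := (pdhg tau1 tau2 x0 y0 k).1.2.

End PDHG.

(* The x-update is a projected
   gradient step on x |-> Lhat x y_k, whose Hessian is 2 Q - 2 rho I; the
   variational inequality of the projection onto the box gives the decrease
   (1/tau1 - ||Q|| + rho) ||x_k - x_{k-1}||^2 <= Lhat(x_{k-1}, y_k) - Lhat(x_k, y_k),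
   which the step size makes at least 3/(4 tau1) ||x_k - x_{k-1}||^2.  The
   y-update is a projected ascent step along
   K xbar_{k-1} + r = (K x_{k-1} + r) + K (x_{k-1} - x_{k-2}); Young's inequality
   bounds both the ascent of Lhat and ||y_k - y_{k-1}||^2 / tau2 by
   tau2 ||K x_{k-1} + r||^2 and tau2 ||K (x_{k-1} - x_{k-2})||^2, which
   tau1 tau2 ||K||^2 <= 1/2 turns into 8/tau1 ||x_{k-1}||^2 + 16 tau2 ||r||^2 and
   2/tau1 ||x_{k-1} - x_{k-2}||^2.  The last term telescopes against the primal
   decrease when summing over k, and the indicator parts of Phi vanish along
   the feasible iterates. *)

From HB Require Import structures.
From mathcomp Require Import all_boot all_order all_algebra.
From mathcomp Require Import all_classical all_reals.
From mathcomp Require Import ereal.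
From mathcomp Require Import ring lra.
Import Order.TTheory GRing.Theory Num.Theory.
Set Implicit Arguments. Unset Strict Implicit.
Local Open Scope ring_scope.

Section InnerProduct.
Variable R : realType.

Lemma vdotC n (u v : 'cV[R]_n) : vdot u v = vdot v u.
Proof. by apply: eq_bigr => i _; rewrite mulrC. Qed.

Lemma vdotDl n (u v w : 'cV[R]_n) : vdot (u + v) w = vdot u w + vdot v w.
Proof. by rewrite /vdot -big_split; apply: eq_bigr => i _; rewrite mxE mulrDl. Qed.

Lemma vdotDr n (u v w : 'cV[R]_n) : vdot w (u + v) = vdot w u + vdot w v.
Proof. by rewrite vdotC vdotDl !(vdotC w). Qed.

Lemma vdotZl n a (u w : 'cV[R]_n) : vdot (a *: u) w = a * vdot u w.
Proof. by rewrite /vdot mulr_sumr; apply: eq_bigr => i _; rewrite mxE mulrA. Qed.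

Lemma vdotZr n a (u w : 'cV[R]_n) : vdot w (a *: u) = a * vdot w u.
Proof. by rewrite vdotC vdotZl vdotC. Qed.

Lemma vdotNl n (u w : 'cV[R]_n) : vdot (- u) w = - vdot u w.
Proof. by rewrite -scaleN1r vdotZl mulN1r. Qed.

Lemma vdotNr n (u w : 'cV[R]_n) : vdot w (- u) = - vdot w u.
Proof. by rewrite vdotC vdotNl vdotC. Qed.

Lemma vdot0l n (u : 'cV[R]_n) : vdot 0 u = 0.
Proof. by rewrite -(scale0r 0) vdotZl mul0r. Qed.

Lemma vdot_mulmx m n (M : 'M[R]_(m, n)) u v :
  vdot u (M *m v) = vdot (M^T *m u) v.
Proof.
rewrite /vdot; under eq_bigr do rewrite mxE big_distrr.
rewrite exchange_big /=; apply: eq_bigr => j _.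
rewrite mxE big_distrl /=; apply: eq_bigr => i _.
by rewrite mxE mulrCA mulrA.
Qed.

Lemma vdot_ge0 n (u : 'cV[R]_n) : 0 <= vdot u u.
Proof. by apply: sumr_ge0 => i _; rewrite -expr2 sqr_ge0. Qed.

Lemma vdot_eq0 n (u : 'cV[R]_n) : (vdot u u == 0) = (u == 0).
Proof.
apply/idP/eqP => [|->]; last by rewrite vdot0l.
rewrite psumr_eq0 => [/allP u0|i _]; last by rewrite -expr2 sqr_ge0.
apply/matrixP => i j; rewrite (ord1 j) mxE.
by have /implyP/(_ isT) := u0 i (mem_index_enum i); rewrite mulf_eq0 orbb => /eqP.
Qed.

Lemma vnorm_ge0 n (u : 'cV[R]_n) : 0 <= vnorm u.
Proof. exact: sqrtr_ge0. Qed.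

Lemma vnorm_sqr n (u : 'cV[R]_n) : vnorm u ^+ 2 = vdot u u.
Proof. by rewrite sqr_sqrtr // vdot_ge0. Qed.

Lemma vnorm_eq0 n (u : 'cV[R]_n) : (vnorm u == 0) = (u == 0).
Proof. by rewrite -vdot_eq0 -sqrf_eq0 vnorm_sqr. Qed.

Lemma vnorm0 n : vnorm (0 : 'cV[R]_n) = 0.
Proof. by apply/eqP; rewrite vnorm_eq0. Qed.

Lemma vnormZ n a (u : 'cV[R]_n) : vnorm (a *: u) = `|a| * vnorm u.
Proof. by rewrite /vnorm vdotZl vdotZr mulrA -expr2 sqrtrM ?sqr_ge0 // sqrtr_sqr. Qed.

Lemma coord_sqr_le n (u : 'cV[R]_n) i : u i 0 ^+ 2 <= vnorm u ^+ 2.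
Proof.
rewrite vnorm_sqr /vdot (bigD1 i) //= -expr2 lerDl.
by apply: sumr_ge0 => j _; rewrite -expr2 sqr_ge0.
Qed.

Lemma vdot_young n a (u v : 'cV[R]_n) : 0 < a ->
  4 * vdot u v <= a^-1 * vnorm u ^+ 2 + 4 * a * vnorm v ^+ 2.
Proof.
move=> a_gt0; rewrite -subr_ge0.
have -> : a^-1 * vnorm u ^+ 2 + 4 * a * vnorm v ^+ 2 - 4 * vdot u v
          = a^-1 * vdot (u - (2 * a) *: v) (u - (2 * a) *: v).
  rewrite !vnorm_sqr !(vdotDl, vdotDr, vdotNl, vdotNr, vdotZl, vdotZr) (vdotC v u).
  by field; rewrite lt0r_neq0.
by rewrite mulr_ge0 ?vdot_ge0 // invr_ge0 ltW.
Qed.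

Lemma vdot_le_vnorm n (u v : 'cV[R]_n) : vdot u v <= vnorm u * vnorm v.
Proof.
have [->|u0] := eqVneq u 0; first by rewrite vdot0l vnorm0 mul0r.
have [->|v0] := eqVneq v 0; first by rewrite vdotC vdot0l vnorm0 mulr0.
have nu_gt0 : 0 < vnorm u by rewrite lt_def vnorm_eq0 u0 vnorm_ge0.
have nv_gt0 : 0 < vnorm v by rewrite lt_def vnorm_eq0 v0 vnorm_ge0.
have a_gt0 : 0 < vnorm u / (2 * vnorm v) by rewrite divr_gt0 ?mulr_gt0.
have := vdot_young u v a_gt0.
have -> : (vnorm u / (2 * vnorm v))^-1 * vnorm u ^+ 2
          + 4 * (vnorm u / (2 * vnorm v)) * vnorm v ^+ 2 = 4 * (vnorm u * vnorm v).
  by field; rewrite !lt0r_neq0.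
lra.
Qed.

Lemma vnormD_sqr_le n (u v : 'cV[R]_n) :
  vnorm (u + v) ^+ 2 <= 2 * vnorm u ^+ 2 + 2 * vnorm v ^+ 2.
Proof.
have := vdot_ge0 (u - v).
rewrite !vnorm_sqr !(vdotDl, vdotDr, vdotNl, vdotNr) (vdotC v u); lra.
Qed.

End InnerProduct.

Section SpectralNorm.
Variable R : realType.

Lemma specnorm_has_sup m n (M : 'M[R]_(m, n)) :
  has_sup [set vnorm (M *m x) | x in [set x : 'cV[R]_n | vnorm x <= 1]]%classic.
Proof.
split; first by exists (vnorm (M *m 0)), 0; rewrite //= vnorm0.
exists (Num.sqrt (\sum_i (\sum_j `|M i j|) ^+ 2)) => _ [x /= x_le1 <-].
have x_bound j : `|x j 0| <= 1.
  rewrite -(@expr_le1 _ 2) // real_normK ?num_real //.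
  by apply: le_trans (coord_sqr_le x j) _; rewrite expr_le1 ?vnorm_ge0.
rewrite /vnorm ler_sqrt; last by apply: sumr_ge0 => i _; rewrite sqr_ge0.
apply: ler_sum => i _; rewrite -expr2 mxE.
have row_bound : `|\sum_j M i j * x j 0| <= \sum_j `|M i j|.
  apply: le_trans (ler_norm_sum _ _ _) _; apply: ler_sum => j _.
  by rewrite normrM -[leRHS]mulr1 ler_wpM2l.
rewrite -real_normK ?num_real // lerXn2r ?nnegrE //.
exact: le_trans (normr_ge0 _) row_bound.
Qed.

Lemma specnorm_ub m n (M : 'M[R]_(m, n)) x :
  vnorm x <= 1 -> vnorm (M *m x) <= specnorm M.
Proof. by move=> x_le1; apply: (sup_upper_bound (specnorm_has_sup M)); exists x. Qed.

Lemma specnorm_ge0 m n (M : 'M[R]_(m, n)) : 0 <= specnorm M.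
Proof. by rewrite -(vnorm0 R m) -(mulmx0 _ M) specnorm_ub // vnorm0. Qed.

Lemma vnorm_mulmx_le m n (M : 'M[R]_(m, n)) x :
  vnorm (M *m x) <= specnorm M * vnorm x.
Proof.
have [->|x0] := eqVneq x 0; first by rewrite mulmx0 !vnorm0 mulr0.
have nx_gt0 : 0 < vnorm x by rewrite lt_def vnorm_eq0 x0 vnorm_ge0.
have unit_x : vnorm ((vnorm x)^-1 *: x) <= 1.
  by rewrite vnormZ ger0_norm ?invr_ge0 ?vnorm_ge0 // mulVf ?lt0r_neq0.
have := specnorm_ub M unit_x.
by rewrite -scalemxAr vnormZ ger0_norm ?invr_ge0 ?vnorm_ge0 // mulrC ler_pdivrMr.
Qed.

Lemma vnorm_mulmx_sqr_le m n (M : 'M[R]_(m, n)) x :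
  vnorm (M *m x) ^+ 2 <= specnorm M ^+ 2 * vnorm x ^+ 2.
Proof. by rewrite -exprMn lerXn2r ?nnegrE ?vnorm_mulmx_le ?mulr_ge0 ?vnorm_ge0 ?specnorm_ge0. Qed.

Lemma vdot_mulmx_le n (M : 'M[R]_n) x : vdot x (M *m x) <= specnorm M * vnorm x ^+ 2.
Proof.
apply: le_trans (vdot_le_vnorm _ _) _.
by rewrite expr2 mulrA mulrC ler_wpM2r ?vnorm_ge0 ?vnorm_mulmx_le.
Qed.

End SpectralNorm.

Section Projections.
Variable R : realType.

Lemma proj_box_in_box n (v : 'cV[R]_n) : in_box (proj_box v).
Proof. by move=> i; rewrite mxE le_min ler01 le_max lexx ge_min lexx. Qed.

Lemma proj_Y_in_Y m1 m2 (v : 'cV[R]_(m1 + m2)) : in_Y (proj_Y v).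
Proof. by move=> i; rewrite col_mxEu mxE le_max lexx. Qed.

Lemma proj_box_variational n (v z : 'cV[R]_n) : in_box z ->
  vnorm (proj_box v - z) ^+ 2 <= vdot (v - z) (proj_box v - z).
Proof.
move=> z_box; rewrite vnorm_sqr; apply: ler_sum => i _; rewrite !mxE.
have /andP[z0 z1] := z_box i; move: (v i 0) (z i 0) z0 z1 => vi zi z0 z1.
have [vi_le0|vi_gt0] := leP vi 0; first by rewrite (min_r ler01); nra.
by have [|] := leP vi 1; nra.
Qed.

Lemma proj_Y_variational m1 m2 (v z : 'cV[R]_(m1 + m2)) : in_Y z ->
  vnorm (proj_Y v - z) ^+ 2 <= vdot (v - z) (proj_Y v - z).
Proof.
move=> z_Y; rewrite vnorm_sqr /vdot !big_split_ord /=.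
apply: lerD; apply: ler_sum => i _; rewrite !mxE.
  rewrite (unsplitK (inl i) : fintype.split (lshift m2 i) = inl i) /= !mxE.
  have := z_Y i; move: (v _ 0) (z _ 0) => vi zi zi_ge0.
  by have [|] := leP vi 0; nra.
by rewrite (unsplitK (inr i) : fintype.split (rshift m1 i) = inr i) /= !mxE.
Qed.

Lemma proj_Y_ascent_bound m1 m2 tau2 (y y1 w z : 'cV[R]_(m1 + m2)) :
  0 < tau2 -> in_Y y -> y1 = proj_Y (y + tau2 *: (w + z)) ->
  tau2^-1 * vnorm (y1 - y) ^+ 2 + 4 * vdot (y1 - y) w
  <= 8 * tau2 * vnorm w ^+ 2 + 4 * tau2 * vnorm z ^+ 2.
Proof.
move=> tau2_gt0 y_Y y1E.
have vi := proj_Y_variational (y + tau2 *: (w + z)) y_Y.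
rewrite -y1E (addrC y) addrK vdotZl vdotC vdotDr in vi.
have {}vi : tau2^-1 * vnorm (y1 - y) ^+ 2 <= vdot (y1 - y) w + vdot (y1 - y) z.
  have itau2_ge0 : 0 <= tau2^-1 by rewrite invr_ge0 ltW.
  by have := ler_wpM2l itau2_ge0 vi; rewrite mulKf ?lt0r_neq0.
have := vdot_young (y1 - y) w tau2_gt0.
have := vdot_young (y1 - y) z tau2_gt0.
lra.
Qed.

End Projections.

Section PDHGAnalysis.
Variables (R : realType) (n m1 m2 : nat) (Q : 'M[R]_n) (c : 'cV[R]_n)
  (A : 'M[R]_(m1, n)) (b : 'cV[R]_m1) (B : 'M[R]_(m2, n)) (d : 'cV[R]_m2)
  (rho : R).

Local Notation K := (Kmat A B).
Local Notation r := (rvec b d).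
Local Notation Lhat := (Lhat Q c A b B d rho).
Local Notation grad := (gradx_Lhat Q c A B rho).

Lemma Phi_feasible x y : in_box x -> in_Y y -> Phi Q c A b B d rho x y = (Lhat x y)%:E.
Proof. by move=> x_box y_Y; rewrite /Phi /h1 /h2 !asboolT //= adde0 sube0. Qed.

Lemma LhatDy x y y1 : Lhat x y1 - Lhat x y = vdot (y1 - y) (K *m x + r).
Proof. by rewrite /Lhat vdotDl vdotNl; ring. Qed.

Hypothesis Q_sym : Q^T = Q.

Lemma LhatDx x h y :
  Lhat (x + h) y - Lhat x y = vdot (grad x y) h + vdot h (Q *m h) - rho * vnorm h ^+ 2.
Proof.
rewrite /Lhat /gradx_Lhat vnorm_sqr.
rewrite !(mulmxDr, vdotDl, vdotDr, vdotNl, vdotNr, vdotZl, vdotZr).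
rewrite (vdot_mulmx Q x h) (vdotC h (Q *m x)) (vdot_mulmx K y h) (vdotC h x).
rewrite (vdotC (ones R n) h) Q_sym; ring.
Qed.

(* The concave term [rho <x, 1 - x>] of [Lhat] enters with the favourable sign [+ rho]. *)
Lemma Lhat_proj_box_descent tau1 x y x1 :
  0 < tau1 -> in_box x -> x1 = proj_box (x - tau1 *: grad x y) ->
  (tau1^-1 - specnorm Q + rho) * vnorm (x1 - x) ^+ 2 <= Lhat x y - Lhat x1 y.
Proof.
move=> tau1_gt0 x_box x1E.
have vi := proj_box_variational (x - tau1 *: grad x y) x_box.
rewrite -x1E addrAC subrr add0r vdotNl vdotZl in vi.
have {}vi : tau1^-1 * vnorm (x1 - x) ^+ 2 <= - vdot (grad x y) (x1 - x).
  have itau1_ge0 : 0 <= tau1^-1 by rewrite invr_ge0 ltW.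
  by have := ler_wpM2l itau1_ge0 vi; rewrite mulrN mulKf ?lt0r_neq0.
have taylor := LhatDx x (x1 - x) y; rewrite (addrC x) subrK in taylor.
have := vdot_mulmx_le Q (x1 - x).
lra.
Qed.

Variables (tau1 tau2 : R) (x0 : 'cV[R]_n) (y0 : 'cV[R]_(m1 + m2)).

Local Notation X := (xit Q c A b B d rho tau1 tau2 x0 y0).
Local Notation Y := (yit Q c A b B d rho tau1 tau2 x0 y0).

Lemma pdhg_snd k : (pdhg Q c A b B d rho tau1 tau2 x0 y0 k).2 = X k.-1.
Proof.
case: k => [|k] //=; rewrite /xit /=.
by case: (pdhg Q c A b B d rho tau1 tau2 x0 y0 k) => [[]].
Qed.

Lemma yitS k : Y k.+1 = proj_Y (Y k + tau2 *: (K *m (2 *: X k - X k.-1) + r)).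
Proof.
rewrite -pdhg_snd /yit /xit /=.
by case: (pdhg Q c A b B d rho tau1 tau2 x0 y0 k) => [[]].
Qed.

Lemma xitS k : X k.+1 = proj_box (X k - tau1 *: grad (X k) (Y k.+1)).
Proof.
rewrite /yit /xit /=.
by case: (pdhg Q c A b B d rho tau1 tau2 x0 y0 k) => [[]].
Qed.

Hypotheses (x0_box : in_box x0) (y0_Y : in_Y y0).

Lemma xit_in_box k : in_box (X k).
Proof. by case: k => [|k] //; rewrite xitS; apply: proj_box_in_box. Qed.

Lemma yit_in_Y k : in_Y (Y k).
Proof. by case: k => [|k] //; rewrite yitS; apply: proj_Y_in_Y. Qed.

Hypotheses (rho_ge0 : 0 <= rho) (tau1_gt0 : 0 < tau1) (tau2_gt0 : 0 < tau2)
  (tau_K : tau1 * tau2 * specnorm K ^+ 2 <= 1 / 2%:R)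
  (tau_Q : tau1 <= 1 / (2%:R * (2%:R * (specnorm Q + rho)))).

Lemma primal_step_size : 4 * (specnorm Q + rho) <= tau1^-1.
Proof.
have D_ge0 : 0 <= specnorm Q + rho by rewrite addr_ge0 ?specnorm_ge0.
have D_gt0 : 0 < specnorm Q + rho.
  rewrite lt_def D_ge0 andbT; apply: contraTneq tau_Q => ->.
  by rewrite !mulr0 invr0 mulr0 -ltNge.
rewrite -div1r ler_pdivlMr //.
by move: tau_Q; rewrite ler_pdivlMr ?mulr_gt0 //; lra.
Qed.

Lemma dual_step_size u : 2 * tau2 * vnorm (K *m u) ^+ 2 <= tau1^-1 * vnorm u ^+ 2.
Proof.
have S_le : 2 * tau2 * specnorm K ^+ 2 <= tau1^-1.
  by rewrite -div1r ler_pdivlMr //; move: tau_K; lra.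
apply: le_trans (_ : _ <= 2 * tau2 * specnorm K ^+ 2 * vnorm u ^+ 2) _.
  by rewrite -[_ * _ * vnorm u ^+ 2]mulrA ler_wpM2l ?vnorm_mulmx_sqr_le // mulr_ge0 // ltW.
by rewrite ler_wpM2r ?sqr_ge0.
Qed.

Lemma pdhg_step k :
  tau1^-1 * vnorm (X k.+1 - X k) ^+ 2 + tau2^-1 * vnorm (Y k.+1 - Y k) ^+ 2
  <= 4 * (Lhat (X k) (Y k) - Lhat (X k.+1) (Y k.+1)) + 8 * tau1^-1 * vnorm (X k) ^+ 2
     + 16 * tau2 * vnorm r ^+ 2
     + 2 * tau1^-1 * (vnorm (X k - X k.-1) ^+ 2 - vnorm (X k.+1 - X k) ^+ 2).
Proof.
set w := K *m X k + r; set z := K *m (X k - X k.-1).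
have descent := Lhat_proj_box_descent tau1_gt0 (xit_in_box k) (xitS k).
have Y_ascent : Y k.+1 = proj_Y (Y k + tau2 *: (w + z)).
  rewrite yitS /w /z; congr (proj_Y (_ + _ *: _)).
  by rewrite [RHS]addrAC -mulmxDr addrA -mulr2n -scaler_nat.
have ascent := proj_Y_ascent_bound tau2_gt0 (yit_in_Y k) Y_ascent.
have dual_gain := LhatDy (X k) (Y k) (Y k.+1).
have w_bound : tau2 * vnorm w ^+ 2 <= tau1^-1 * vnorm (X k) ^+ 2 + 2 * tau2 * vnorm r ^+ 2.
  have := ler_wpM2l (ltW tau2_gt0) (vnormD_sqr_le (K *m X k) r).
  have := dual_step_size (X k); lra.
have z_bound := dual_step_size (X k - X k.-1).
have D_le := primal_step_size.
have h_ge0 : 0 <= vnorm (X k.+1 - X k) ^+ 2 := sqr_ge0 _.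
have coeff : 3 * tau1^-1 <= 4 * (tau1^-1 - specnorm Q + rho).
  by move: D_le rho_ge0; lra.
have := ler_wpM2r h_ge0 coeff.
lra.
Qed.

Lemma pdhg_energy_sum N :
  tau1^-1 * \sum_(1 <= k < N.+1) vnorm (X k - X k.-1) ^+ 2
  + tau2^-1 * \sum_(1 <= k < N.+1) vnorm (Y k - Y k.-1) ^+ 2
  <= 4 * (Lhat x0 y0 - Lhat (X N) (Y N))
     + 8 * tau1^-1 * \sum_(1 <= k < N.+1) vnorm (X k.-1) ^+ 2
     + 16 * tau2 * vnorm r ^+ 2 * N%:R
     - 2 * tau1^-1 * vnorm (X N - X N.-1) ^+ 2.
Proof.
elim: N => [|N IH].
  have -> : X 0 = x0 by []; have -> : Y 0 = y0 by [].
  by rewrite !big_geq // !subrr vnorm0; lra.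
rewrite !(big_nat_recr N.+1) //= -natr1.
have := pdhg_step N; lra.
Qed.

End PDHGAnalysis.

Theorem mainTheorem3 (R : realType) (n m1 m2 : nat) (Q : 'M[R]_n) (c : 'cV[R]_n)
  (A : 'M[R]_(m1, n)) (b : 'cV[R]_m1) (B : 'M[R]_(m2, n)) (d : 'cV[R]_m2)
  (rho tau1 tau2 : R) (x0 : 'cV[R]_n) (y0 : 'cV[R]_(m1 + m2)) :
  (0 < n)%N -> (0 < m1)%N -> (0 < m2)%N ->
  Q^T = Q -> 0 <= rho -> 0 < tau1 -> 0 < tau2 ->
  tau1 * tau2 * specnorm (Kmat A B) ^+ 2 <= 1 / 2%:R ->
  tau1 <= 1 / (2%:R * (2%:R * (specnorm Q + rho))) ->
  in_box x0 -> in_Y y0 ->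
  forall N : nat, (1 <= N)%N ->
  let x := xit Q c A b B d rho tau1 tau2 x0 y0 in
  let y := yit Q c A b B d rho tau1 tau2 x0 y0 in
  let Phi := Phi Q c A b B d rho in
  ((1 / tau1 * \sum_(1 <= k < N.+1) vnorm (x k - x k.-1) ^+ 2
    + 1 / tau2 * \sum_(1 <= k < N.+1) vnorm (y k - y k.-1) ^+ 2)%:E
   <= 4%:R%:E * (Phi x0 y0 - Phi (x N) (y N))
      + (8%:R / tau1 * \sum_(1 <= k < N.+1) vnorm (x k.-1) ^+ 2
         + 16%:R * tau2 * vnorm (rvec b d) ^+ 2 * N%:R)%:E)%E.
Proof.
move=> _ _ _ Q_sym rho_ge0 tau1_gt0 tau2_gt0 tau_K tau_Q x0_box y0_Y N _; cbv zeta.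
have xN_box : in_box (xit Q c A b B d rho tau1 tau2 x0 y0 N) by apply: xit_in_box.
have yN_Y : in_Y (yit Q c A b B d rho tau1 tau2 x0 y0 N) by apply: yit_in_Y.
rewrite !Phi_feasible //.
rewrite -EFinB -EFinM -EFinD lee_fin !div1r.
have := pdhg_energy_sum c b d Q_sym x0_box y0_Y rho_ge0 tau1_gt0 tau2_gt0 tau_K tau_Q N.
set x := xit _ _ _ _ _ _ _ _ _ _ _.
have : 0 <= tau1^-1 * vnorm (x N - x N.-1) ^+ 2.
  by rewrite mulr_ge0 ?sqr_ge0 // invr_ge0 ltW.
lra.
Qed.
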